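(* Under either the overlap preference model or the cost preference model, for every $k\in\mathbb{N}$, the pair $\langle R,F\rangle$, where $R$ is the $k$-equal-representation shortlisting rule and $F$ is any unanimous allocation rule, is neither U-FSSP-P nor U-FSSP-O.
   Context: Throughout, $\mathbb{N}=\{1,2,3,\dots\}$. Let $\mathbb{P}=\{p_1,\dots,p_m\}$ be a finite set of projects, $c:\mathbb{P}\to\mathbb{N}$ a cost function with $c(P)=\sum_{p\in P}c(p)$, $B\in\mathbb{N}$ a budget with $c(p)\le B$ for all $p$; agents $\mathcal{N}=\{1,\dots,n\}$. Tie-breaking: for a nonempty family $\mathfrak{P}$ of subsets of $\mathbb{P}$, $T(\mathfrak{P})$ is the unique $P\in\mathfrak{P}$ such that for all $P'\in\mathfrak{P}\setminus\{P\}$ the lowest-index project of $(P\setminus P')\cup(P'\setminus P)$ lies in $P$. Greedy selection $\mathit{GREED}(P,\gg)$, for $P\subseteq\mathbb{P}$ and a strict linear order $\gg$ on $P$, examines projects in the order $\gg$ and selects a project iff doing so keeps the total cost of selected projects at most $B$. Shortlisting stage: shortlisting instance $I=\langle\mathbb{P},c,B\rangle$; shortlisting profile $\boldsymbol{P}=(P_1,\dots,P_n)$, $P_i\subseteq\mathbb{P}$, $\bigcup\boldsymbol{P}=P_1\cup\dots\cup P_n$; $(\boldsymbol{P}_{-i},P_i')$ replaces $P_i$ by $P_i'$. The $k$-equal-representation shortlisting rule returns $R(I,\boldsymbol{P})=T\big(\operatorname*{argmax}_{P\subseteq\bigcup\boldsymbol{P},\ c(P)\le kB}\sum_{i\in\mathcal{N}}\sum_{\ell=0}^{|P_i\cap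 P|}n^{-\ell}\big)$. Each agent $i$ has an awareness set $C_i\subseteq\mathbb{P}$; $\boldsymbol{C}=(C_1,\dots,C_n)$. Allocation stage: allocation instance $\langle\mathcal{P},c,B\rangle$, $\mathcal{P}\subseteq\mathbb{P}$; profile $\boldsymbol{A}=(A_1,\dots,A_n)$, $A_i\subseteq\mathcal{P}$; $A\subseteq\mathcal{P}$ is feasible if $c(A)\le B$; an allocation rule $F$ outputs a feasible $F(I,\boldsymbol{A})$; $F$ is unanimous if for every allocation instance $I$ and every profile $(A,\dots,A)$ with $A$ feasible, $F(I,(A,\dots,A))\supseteq A$. Preferences: each agent $i$ has a strict linear order $\rhd_i$ on $\mathbb{P}$; $\mathit{top}_i(\mathcal{P})=\mathit{GREED}(\mathcal{P},\rhd_i|_{\mathcal{P}})$. For $P\subseteq\mathbb{P}$: overlap model $A\succeq_P A'$ iff $|A\cap P|\ge|A'\cap P|$; cost model $A\succeq_P A'$ iff $c(A\cap P)\ge c(A'\cap P)$; $\succ_P$ its strict part. $\mathit{best}(\succ,\mathfrak{P})$ is the set of elements of $\mathfrak{P}$ undominated w.r.t. $\succ$. Best response: for $I=\langle\mathcal{P},c,B\rangle$, profile $\boldsymbol{A}$, agent $i$: $A_i^\star(I,\boldsymbol{A})=T(\mathit{best}(\succ_{\mathit{top}_i(\mathcal{P})},\{F(I,(\boldsymbol{A}_{-i},A_i'))\mid A_i'\subseteq\mathcal{P}\}))$ and $F^\star(I,\boldsymbol{A})=F(I,(\boldsymbol{A}_{-i},A_i^\star(I,\boldsymbol{A})))$.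 Manipulation: given $R,F$, shortlisting instance $I_1$, profile $\boldsymbol{P}$, agent $i$, $P_i'\subseteq\mathbb{P}$, let $\mathcal{P}=R(I_1,\boldsymbol{P})$, $\mathcal{P}'=R(I_1,(\boldsymbol{P}_{-i},P_i'))$, $I_2=\langle\mathcal{P},c,B\rangle$, $I_2'=\langle\mathcal{P}',c,B\rangle$, $Q=\mathit{top}_i(\mathcal{P}\cup\mathcal{P}')$. $P_i'$ is a successful pessimistic manipulation if for all profiles $\boldsymbol{A}$ on $\mathcal{P}$ and $\boldsymbol{A}'$ on $\mathcal{P}'$, $F^\star(I_2',\boldsymbol{A}')\succeq_Q F^\star(I_2,\boldsymbol{A})$, strictly for at least one pair; a successful optimistic manipulation if for some $\boldsymbol{A}$ on $\mathcal{P}$ and some $\boldsymbol{A}'$ on $\mathcal{P}'$, $F^\star(I_2',\boldsymbol{A}')\succ_Q F^\star(I_2,\boldsymbol{A})$. U-FSSP: for a preference model and a manipulation type, $\langle R,F\rangle$ is U-FSSP if for every shortlisting instance, awareness profile $\boldsymbol{C}$, shortlisting profile $\boldsymbol{P}$ with $P_{i'}\subseteq C_{i'}$ for all $i'$, and agent $i$, there is no $P_i'\subseteq C_i\cup\bigcup\boldsymbol{P}$ such that submitting $P_i'$ instead of $\mathit{top}_i(C_i\cup\bigcup\boldsymbol{P})$ (i.e., going from $(\boldsymbol{P}_{-i},\mathit{top}_i(C_i\cup\bigcup\boldsymbol{P}))$ to $(\boldsymbol{P}_{-i},P_i')$) is a successful manipulation of that type. U-FSSP-P and U-FSSP-O refer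 to pessimistic and optimistic manipulation. *)

From mathcomp Require Import all_boot all_order all_algebra.
Set Implicit Arguments.
Unset Strict Implicit.
Unset Printing Implicit Defensive.
Import Order.TTheory GRing.Theory Num.Theory.

(* Projects are 'I_m (project p_{j+1} is the ordinal j, so "lowest index"
   = smallest ordinal); agents are 'I_n. *)

Definition cost {m : nat} (c : 'I_m -> nat) (S : {set 'I_m}) : nat :=
  \sum_(p in S) c p.

Definition valid_instance {m : nat} (c : 'I_m -> nat) (B : nat) : bool :=
  (0 < B) && [forall p, (0 < c p) && (c p <= B)].

Definition lex_wins {m : nat} (P P' : {set 'I_m}) : bool :=
  [exists x, (x \in P :\: P') &&
     [forall y : 'I_m, (val y < val x)%N ==> ((y \in P) == (y \in P'))]].

(* tie-breaking T (unique on nonempty families; default set0 otherwise) *)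
Definition tiebreak {m : nat} (fam : {set {set 'I_m}}) : {set 'I_m} :=
  odflt set0 [pick P in fam | [forall P' in fam, (P' != P) ==> lex_wins P P']].

(* GREED(P, >>) where the strict linear order >> on all projects is given by
   the sequence [ord] (most preferred first, a permutation of all projects),
   restricted to P. *)
Definition greed {m : nat} (c : 'I_m -> nat) (B : nat) (ord : seq 'I_m)
  (P : {set 'I_m}) : {set 'I_m} :=
  foldl (fun S p => if (p \in P) && (cost c S + c p <= B) then p |: S else S)
        set0 ord.

Definition top {m : nat} (c : 'I_m -> nat) (B : nat) (ord : seq 'I_m)
  (P : {set 'I_m}) : {set 'I_m} := greed c B ord P.

Definition bigU {n m : nat} (P : 'I_n -> {set 'I_m}) : {set 'I_m} :=
  \bigcup_(j < n) P j.

Definition upd {n m : nat} (P : 'I_n -> {set 'I_m}) (i : 'I_n) (X : {set 'I_m})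
  : 'I_n -> {set 'I_m} := fun j => if j == i then X else P j.

Definition er_score {n m : nat} (P : 'I_n -> {set 'I_m}) (S : {set 'I_m}) : rat :=
  (\sum_(j < n) \sum_(l < #|P j :&: S|.+1) ((n%:R : rat) ^+ l)^-1)%R.

Definition R_er {n m : nat} (k : nat) (c : 'I_m -> nat) (B : nat)
  (P : 'I_n -> {set 'I_m}) : {set 'I_m} :=
  tiebreak [set S in powerset (bigU P) |
    (cost c S <= k * B) &&
    [forall S' in powerset (bigU P),
       (cost c S' <= k * B) ==> (er_score P S' <= er_score P S)%R]].

(* an allocation rule: defined on every allocation instance <calP, c, B>
   (for any number of projects m and agents n) and every profile *)
Definition alloc_rule : Type :=
  forall (n m : nat), {set 'I_m} -> ('I_m -> nat) -> nat ->
    ('I_n -> {set 'I_m}) -> {set 'I_m}.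

Definition profile_on {n m : nat} (calP : {set 'I_m}) (A : 'I_n -> {set 'I_m})
  : Prop := forall j, A j \subset calP.

Definition is_alloc_rule (F : alloc_rule) : Prop :=
  forall (n m : nat) (calP : {set 'I_m}) (c : 'I_m -> nat) (B : nat)
         (A : 'I_n -> {set 'I_m}),
    valid_instance c B -> profile_on calP A ->
    F n m calP c B A \subset calP /\ cost c (F n m calP c B A) <= B.

Definition unanimous (F : alloc_rule) : Prop :=
  forall (n m : nat) (calP : {set 'I_m}) (c : 'I_m -> nat) (B : nat)
         (A : {set 'I_m}),
    valid_instance c B -> A \subset calP -> cost c A <= B ->
    A \subset F n m calP c B (fun _ : 'I_n => A).

Inductive pref_model := Overlap | CostModel.

(* A >=_Q A'  iff  util Q A' <= util Q A *)
Definition util (mo : pref_model) {m : nat} (c : 'I_m -> nat) (Q A : {set 'I_m})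
  : nat :=
  match mo with
  | Overlap => #|A :&: Q|
  | CostModel => cost c (A :&: Q)
  end.

Definition best (mo : pref_model) {m : nat} (c : 'I_m -> nat) (Q : {set 'I_m})
  (fam : {set {set 'I_m}}) : {set {set 'I_m}} :=
  [set X in fam | [forall Y in fam, ~~ (util mo c Q X < util mo c Q Y)]].

Definition A_star (F : alloc_rule) (mo : pref_model) {n m : nat}
  (calP : {set 'I_m}) (c : 'I_m -> nat) (B : nat) (ord : seq 'I_m)
  (i : 'I_n) (A : 'I_n -> {set 'I_m}) : {set 'I_m} :=
  tiebreak (best mo c (top c B ord calP)
              [set F n m calP c B (upd A i X) | X in powerset calP]).

Definition F_star (F : alloc_rule) (mo : pref_model) {n m : nat}
  (calP : {set 'I_m}) (c : 'I_m -> nat) (B : nat) (ord : seq 'I_m)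
  (i : 'I_n) (A : 'I_n -> {set 'I_m}) : {set 'I_m} :=
  F n m calP c B (upd A i (A_star F mo calP c B ord i A)).

Inductive manip_type := Pessimistic | Optimistic.

Definition successful_manip (mt : manip_type) (mo : pref_model) (k : nat)
  (F : alloc_rule) {n m : nat} (c : 'I_m -> nat) (B : nat) (ord : seq 'I_m)
  (P : 'I_n -> {set 'I_m}) (i : 'I_n) (P' : {set 'I_m}) : Prop :=
  let calP := R_er k c B P in
  let calP' := R_er k c B (upd P i P') in
  let Q := top c B ord (calP :|: calP') in
  match mt with
  | Pessimistic =>
      (forall A A' : 'I_n -> {set 'I_m}, profile_on calP A -> profile_on calP' A' ->
         util mo c Q (F_star F mo calP c B ord i A)
           <= util mo c Q (F_star F mo calP' c B ord i A')) /\
      (exists A A' : 'I_n -> {set 'I_m}, profile_on calP A /\ profile_on calP' A' /\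
         util mo c Q (F_star F mo calP c B ord i A)
           < util mo c Q (F_star F mo calP' c B ord i A'))
  | Optimistic =>
      exists A A' : 'I_n -> {set 'I_m}, profile_on calP A /\ profile_on calP' A' /\
         util mo c Q (F_star F mo calP c B ord i A)
           < util mo c Q (F_star F mo calP' c B ord i A')
  end.

Definition UFSSP (mt : manip_type) (mo : pref_model) (k : nat) (F : alloc_rule)
  : Prop :=
  forall (n m : nat) (c : 'I_m -> nat) (B : nat) (pref : 'I_n -> seq 'I_m),
    valid_instance c B ->
    (forall j, perm_eq (pref j) (enum 'I_m)) ->
    forall (C P : 'I_n -> {set 'I_m}),
      (forall j, P j \subset C j) ->
      forall (i : 'I_n) (P' : {set 'I_m}),
        P' \subset C i :|: bigU P ->
        ~ successful_manip mt mo k F c B (pref i)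
            (upd P i (top c B (pref i) (C i :|: bigU P))) i P'.

From Pilot Require Import Defs.
From mathcomp Require Import all_boot all_order all_algebra.
From mathcomp Require Import zify ring.
From Stdlib Require Import FunctionalExtensionality.

Set Implicit Arguments.
Unset Strict Implicit.
Unset Printing Implicit Defensive.
Import Order.TTheory GRing.Theory Num.Theory.

(* Counterexample for k = K + 1 and budget B = 2.  The projects are t, q, r, s and
   x_0, ..., x_{K-1}, ranked in this order by every agent, with cost 1 for q and r and
   2 for all others.  Agent 0 is aware only of t, agent 1 approves {q, r}, two agents
   approve s and three agents approve each x_l, so n = 3K + 4.  Every ballot meets a
   shortlist in at most two projects, hence n^2 times the equal-representation score is
   n^3 + n * (number of agents served) + [agent 1 gets both q and r].  The x_l serve three
   agents per cost 2 and fill 2K of the shortlist budget 2K + 2.  Truthfully the last two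
   units go to s (two agents served) rather than t or {q, r} (one agent each), giving
   {s, x_l}; if agent 0 reports q instead, {q, r} serves two agents and earns the bonus,
   giving {q, r, x_l}.  Agent 0's favourite feasible set within the union of the two
   shortlists is {q, r}: it misses the truthful shortlist entirely, while by unanimity it
   is the outcome on the manipulated shortlist when everybody proposes it. *)


Section Sets.
Variable m : nat.
Implicit Types (P Q A S X Y Z W : {set 'I_m}) (c : 'I_m -> nat).

Lemma tiebreak_set1 X : tiebreak [set X] = X.
Proof.
rewrite /tiebreak; case: pickP => [Y /andP [] | none]; first by rewrite inE => /eqP.
have := none X; rewrite inE eqxx /=.
have -> // : [forall P' in [set X], (P' != X) ==> lex_wins X P'].
by apply/forall_inP => P'; rewrite inE => ->.
Qed.

Lemma tiebreak_sub (fam : {set {set 'I_m}}) Y :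
  (forall X, X \in fam -> X \subset Y) -> tiebreak fam \subset Y.
Proof.
by rewrite /tiebreak => fam_sub; case: pickP => [X /andP [/fam_sub] | _] //=; rewrite sub0set.
Qed.

Lemma cost_set0 c : cost c set0 = 0.
Proof. by rewrite /cost big_set0. Qed.

Lemma cost_set1 c p : cost c [set p] = c p.
Proof. by rewrite /cost big_set1. Qed.

Lemma cost_set2 c p q : p != q -> cost c [set p; q] = c p + c q.
Proof. by move=> pq; rewrite /cost big_setU1 ?inE //= big_set1. Qed.

Lemma cost_setD c X Y : X \subset Y -> cost c Y = cost c X + cost c (Y :\: X).
Proof. by move=> sXY; rewrite /cost (big_setID X) /= (setIidPr sXY). Qed.

Lemma subset_leq_cost c X Y : X \subset Y -> cost c X <= cost c Y.
Proof. by move=> sXY; rewrite (cost_setD c sXY) leq_addr. Qed.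

Lemma proper_ltn_cost c X Y : (forall p, 0 < c p) -> X \proper Y -> cost c X < cost c Y.
Proof.
move=> c_gt0 /properP [sXY [p pY pX]]; rewrite (cost_setD c sXY) -addn1 leq_add2l.
by rewrite (leq_trans (c_gt0 p)) // -cost_set1 subset_leq_cost // sub1set inE pX.
Qed.

Lemma saturated_cost_maximal c B Z W : (forall p, 0 < c p) ->
  cost c Z = B -> Z \subset W -> cost c W <= B -> W = Z.
Proof.
move=> c_gt0 costZ sZW; case: (eqVproper sZW) => [-> // | /(proper_ltn_cost c_gt0)].
by rewrite costZ => /leq_trans lt_le /lt_le; rewrite ltnn.
Qed.

Lemma greed_foldl_saturated c B P S (s : seq 'I_m) : (forall p, 0 < c p) ->
  B <= cost c S ->
  foldl (fun S p => if (p \in P) && (cost c S + c p <= B) then p |: S else S) S s = S.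
Proof.
move=> c_gt0 full; elim: s => //= p s.
have over : B < cost c S + c p by have := c_gt0 p; lia.
by rewrite leqNgt over andbF.
Qed.

Lemma util_disjoint mo c Q A : [disjoint A & Q] -> util mo c Q A = 0.
Proof. by move/disjoint_setI0 => AQ0; case: mo; rewrite /util AQ0 ?cards0 // /cost big_set0. Qed.

Lemma leq_util_self mo c Q A : util mo c Q A <= util mo c Q Q.
Proof.
by case: mo; rewrite /util setIid ?subset_leq_card ?subset_leq_cost // subsetIr.
Qed.

Lemma util_self_subset mo c Q A : (forall p, 0 < c p) ->
  util mo c Q Q <= util mo c Q A -> Q \subset A.
Proof.
move=> c_gt0; rewrite /util setIid => le_QA.
have /eqVproper [<- | prop] : A :&: Q \subset Q by exact: subsetIr.
  exact: subsetIl.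
by move: le_QA; case: mo; rewrite leqNgt ?proper_card ?proper_ltn_cost.
Qed.

Lemma util_self_gt0 mo c Q : (forall p, 0 < c p) -> Q != set0 -> 0 < util mo c Q Q.
Proof.
move=> c_gt0 /set0Pn [p pQ]; rewrite /util setIid; case: mo; first by apply/card_gt0P; exists p.
by rewrite (leq_trans (c_gt0 p)) // -cost_set1 subset_leq_cost // sub1set.
Qed.

End Sets.

Lemma valid_cost_gt0 m (c : 'I_m -> nat) B : valid_instance c B -> forall p, 0 < c p.
Proof. by case/andP => _ /forallP valid p; case/andP: (valid p). Qed.

Lemma profile_on_upd n m (calP X : {set 'I_m}) (A : 'I_n -> {set 'I_m}) i :
  profile_on calP A -> X \subset calP -> profile_on calP (upd A i X).
Proof. by move=> A_on X_sub j; rewrite /upd; case: ifP. Qed.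

Lemma upd_const n m (Z : {set 'I_m}) (i : 'I_n) : upd (fun _ => Z) i Z = (fun _ => Z).
Proof. by apply: functional_extensionality => j; rewrite /upd; case: ifP. Qed.

Section BestResponse.
Variable F : alloc_rule.
Arguments F : clear implicits.
Variables (mo : pref_model) (n m : nat) (c : 'I_m -> nat) (B : nat).
Variables (ord : seq 'I_m) (i : 'I_n).
Implicit Types (calP X Z W : {set 'I_m}) (A : 'I_n -> {set 'I_m}).
Hypothesis F_rule : is_alloc_rule F.
Hypothesis instance_ok : valid_instance c B.

Lemma F_feasible calP A : profile_on calP A ->
  F n m calP c B A \subset calP /\ cost c (F n m calP c B A) <= B.
Proof. exact: F_rule. Qed.

Lemma F_star_sub calP A : profile_on calP A -> F_star F mo calP c B ord i A \subset calP.
Proof.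
move=> A_on; have F_sub X : X \subset calP -> F n m calP c B (upd A i X) \subset calP.
  by move=> X_sub; case: (F_feasible (profile_on_upd i A_on X_sub)).
apply: (F_sub); apply: tiebreak_sub => Y; rewrite inE => /andP [/imsetP [X + ->] _].
by rewrite powersetE; apply: F_sub.
Qed.

Hypothesis F_unanimous : unanimous F.

(* Unanimity makes [Z] reachable, and no reachable outcome can dominate it. *)
Lemma F_star_const calP Z :
  Z \subset calP -> cost c Z <= B ->
  (forall W, Z \subset W -> cost c W <= B -> W = Z) ->
  top c B ord calP = Z -> F_star F mo calP c B ord i (fun _ => Z) = Z.
Proof.
move=> Z_sub Z_feas Z_max topZ.
have Z_on : profile_on calP (fun _ : 'I_n => Z) by [].
have FZ : F n m calP c B (fun _ => Z) = Z.
  by apply: Z_max; [exact: F_unanimous | case: (F_feasible Z_on)].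
set fam := [set F n m calP c B (upd (fun _ => Z) i X) | X in powerset calP].
have Z_fam : Z \in fam by apply/imsetP; exists Z; rewrite ?powersetE // upd_const FZ.
have best_Z : best mo c Z fam = [set Z].
  apply/setP => Y; rewrite /best !inE; apply/andP/eqP => [[Y_fam] | ->].
    move/forall_inP/(_ Z Z_fam); rewrite -leqNgt.
    move/(util_self_subset (valid_cost_gt0 instance_ok)).
    move/Z_max; apply; case/imsetP: Y_fam => X; rewrite powersetE => X_sub ->.
    by case: (F_feasible (profile_on_upd i Z_on X_sub)).
  by split=> //; apply/forall_inP => Y' _; rewrite -leqNgt leq_util_self.
by rewrite /F_star /A_star topZ -/fam best_Z tiebreak_set1 upd_const.
Qed.

End BestResponse.

Lemma R_er_unique_optimum n m k (c : 'I_m -> nat) B (P : 'I_n -> {set 'I_m}) (S : {set 'I_m}) :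
  S \subset Defs.bigU P -> cost c S <= k * B ->
  (forall S', cost c S' <= k * B -> (er_score P S <= er_score P S')%R -> S' = S) ->
  R_er k c B P = S.
Proof.
move=> S_sub S_feas S_max; rewrite /R_er -[RHS]tiebreak_set1; congr tiebreak.
apply/setP => S'; rewrite !inE; apply/idP/eqP => [/and3P [_ S'_feas /forall_inP S'_opt] | ->].
  by apply: S_max => //; apply: (implyP (S'_opt S _)); rewrite ?powersetE.
rewrite S_sub S_feas; apply/forall_inP => S'' _; apply/implyP => S''_feas.
rewrite leNgt; apply/negP => lt_SS''; move: (lt_SS'').
by rewrite (S_max _ S''_feas (ltW lt_SS'')) ltxx.
Qed.

(* [n ^ 2] times the contribution [sum_(l <= x) n ^ -l] of an agent with [x <= 2]
   selected approved projects. *)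
Definition er_weight (n x : nat) : nat := n ^ 2 + n * (0 < x) + (1 < x).

Definition nat_score n m (P : 'I_n -> {set 'I_m}) (S : {set 'I_m}) : nat :=
  \sum_(j < n) er_weight n #|P j :&: S|.

Lemma er_weight_scaled n x : 0 < n -> x <= 2 ->
  ((n%:R : rat) ^+ 2 * \sum_(l < x.+1) ((n%:R : rat) ^+ l)^-1 = (er_weight n x)%:R)%R.
Proof.
rewrite -(ltr0n rat) => /lt0r_neq0 n_neq0.
rewrite /er_weight; case: x => [|[|[|x]]] // _.
all: by rewrite !big_ord_recr big_ord0 /= ?natrD ?natrM ?natrX; field.
Qed.

Lemma ler_er_score n m (P : 'I_n -> {set 'I_m}) : 0 < n -> (forall j, #|P j| <= 2) ->
  forall S T, (er_score P S <= er_score P T)%R = (nat_score P S <= nat_score P T).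
Proof.
move=> n_gt0 P_small S T.
have scaled U : ((n%:R : rat) ^+ 2 * er_score P U = (nat_score P U)%:R)%R.
  rewrite /er_score mulr_sumr natr_sum; apply: eq_bigr => j _.
  by rewrite er_weight_scaled // (leq_trans (subset_leq_card (subsetIl _ _))).
by rewrite -(ler_pM2l (_ : 0 < (n%:R : rat) ^+ 2)%R) ?exprn_gt0 ?ltr0n // !scaled ler_nat.
Qed.

Lemma er_weight_bool n (b : bool) : er_weight n b = n ^ 2 + n * b.
Proof. by case: b; rewrite /er_weight addn0. Qed.

Lemma er_weight_bool2 n (a b : bool) : er_weight n (a + b) = n ^ 2 + n * (a || b) + (a && b).
Proof. by case: a b => [] []. Qed.

Lemma card_set1I (T : finType) (x : T) (A : {set T}) : #|[set x] :&: A| = (x \in A).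
Proof.
case: (boolP (x \in A)) => xA; first by rewrite (setIidPl _) ?cards1 ?sub1set.
by rewrite disjoint_setI0 ?cards0 // disjoints1.
Qed.

Lemma card_set2I (T : finType) (x y : T) (A : {set T}) : x != y ->
  #|[set x; y] :&: A| = (x \in A) + (y \in A).
Proof.
move=> xy; rewrite setIUl cardsU !card_set1I (_ : _ :&: _ = set0) ?cards0 ?subn0 //.
by apply/setP => z; rewrite !inE; case: (eqVneq z x) => [-> | _]; rewrite ?(negbTE xy) ?andbF.
Qed.

Lemma sum_nat_of_bool (T : Type) (r : seq T) (a : pred T) :
  \sum_(x <- r) (a x : nat) = count a r.
Proof. by rewrite -sum1_count [RHS]big_mkcond; apply: eq_bigr => x _; case: (a x). Qed.

Lemma sum_ord_inord k (G : 'I_k.+1 -> nat) :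
  \sum_(p < k.+1) G p = \sum_(0 <= j < k.+1) G (inord j).
Proof. by rewrite big_mkord; apply: eq_bigr => p _; rewrite inord_val. Qed.

Lemma sum_nat_divn (d L : nat) (f : nat -> nat) :
  \sum_(0 <= e < d * L) f (e %/ d) = d * \sum_(0 <= l < L) f l.
Proof.
rewrite mulnC.
case: d => [|d]; first by rewrite muln0 mul0n big_geq.
elim: L => [|L IH]; first by rewrite mul0n !big_geq ?muln0.
rewrite mulSn addnC (@big_cat_nat _ _ _ (L * d.+1)) ?leq_addr //= IH big_nat_recr //= mulnDr.
rewrite -{1}[L * d.+1]add0n big_addn addKn; congr (_ + _).
rewrite (eq_big_nat _ _ (F2 := fun => f L)) ?sum_nat_const_nat ?subn0 // => r /andP [_ r_lt].
by rewrite addnC divnMDl // divn_small ?addn0.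
Qed.

Lemma ltn_mul_add (N V W e : nat) : e < N -> V < W -> N * V + e < N * W.
Proof.
move=> eN VW; apply: (@leq_trans (N * V.+1)); first by rewrite mulnSr ltn_add2l.
by rewrite leq_mul2l VW orbT.
Qed.

Lemma mul_add_leq (N V W e : nat) : e < N -> N * W <= N * V + e -> W <= V.
Proof. by move=> eN; apply: contraTT; rewrite -!ltnNge => /(ltn_mul_add eN). Qed.

Section Counterexample.
Variable K : nat.
Local Notation m := K.+4.
Local Notation n := (3 * K).+4.
Implicit Types (S T V : {set 'I_m}) (p : 'I_m).

Definition pt : 'I_m := inord 0.
Definition pq : 'I_m := inord 1.
Definition pr : 'I_m := inord 2.
Definition ps : 'I_m := inord 3.
Definition px (l : nat) : 'I_m := inord l.+4.

Definition price p : nat := match nat_of_ord p with 1 | 2 => 1 | _ => 2 end.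

Definition ballot (p0 : 'I_m) (j : nat) : {set 'I_m} :=
  match j with
  | 0 => [set p0]
  | 1 => [set pq; pr]
  | 2 | 3 => [set ps]
  | j.+4 => [set px (j %/ 3)]
  end.

Definition profile (p0 : 'I_m) (j : 'I_n) : {set 'I_m} := ballot p0 j.

Definition St : {set 'I_m} := [set p : 'I_m | 3 <= p].
Definition Sm : {set 'I_m} := [set p : 'I_m | (0 < p) && (p != 3 :> nat)].

Definition xcount (S : {set 'I_m}) : nat := count (fun l => px l \in S) (iota 0 K).

Definition value (p0 : 'I_m) S : nat :=
  (p0 \in S) + ((pq \in S) || (pr \in S)) + 2 * (ps \in S) + 3 * xcount S.

Lemma val_pt : pt = 0 :> nat. Proof. by rewrite /pt inordK. Qed.
Lemma val_pq : pq = 1 :> nat. Proof. by rewrite /pq inordK. Qed.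
Lemma val_pr : pr = 2 :> nat. Proof. by rewrite /pr inordK. Qed.
Lemma val_ps : ps = 3 :> nat. Proof. by rewrite /ps inordK. Qed.
Lemma val_px l : l < K -> px l = l.+4 :> nat. Proof. by move=> lK; rewrite /px inordK. Qed.

Lemma valid_price : valid_instance price 2.
Proof.
by apply/andP; split => //; apply/forallP => p; rewrite /price; case: (nat_of_ord p) => [|[|[|]]].
Qed.

Lemma pq_neq_pr : pq != pr.
Proof. by apply/eqP => /(congr1 (@nat_of_ord _)); rewrite val_pq val_pr. Qed.

Lemma xcount_le S : xcount S <= K.
Proof. by rewrite /xcount (leq_trans (count_size _ _)) ?size_iota. Qed.

Lemma xcountP S : reflect (forall l, l < K -> px l \in S) (xcount S == K).
Proof.
rewrite /xcount -[X in _ == X](size_iota 0 K) -all_count.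
apply: (iffP allP) => [all_in l lK | all_in l]; first by apply: all_in; rewrite mem_iota.
by rewrite mem_iota add0n => /andP [_ /all_in].
Qed.

Lemma eq_on_projects S T :
  pt \in S = (pt \in T) -> pq \in S = (pq \in T) -> pr \in S = (pr \in T) ->
  ps \in S = (ps \in T) -> xcount S = K -> xcount T = K -> S = T.
Proof.
move=> eq_t eq_q eq_r eq_s /eqP/xcountP xS /eqP/xcountP xT.
apply/setP => p; rewrite -[p]inord_val.
case: p => [[|[|[|[|l]]]] /= lt_p] //; rewrite ?xS ?xT //; lia.
Qed.

Lemma cost_price S :
  cost price S = 2 * (pt \in S) + (pq \in S) + (pr \in S) + 2 * (ps \in S) + 2 * xcount S.
Proof.
rewrite /cost big_mkcond sum_ord_inord !big_nat_recl //= -/pt -/pq -/pr -/ps.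
rewrite /price val_pt val_pq val_pr val_ps /=.
rewrite (eq_big_nat _ _ (F2 := fun l => 2 * (px l \in S))) => [|l /andP [_ lK]]; last first.
  by rewrite -/(px l) val_px //; case: (_ \in S).
rewrite -big_distrr /= /index_iota subn0 sum_nat_of_bool -/(xcount S).
by case: (pt \in S) (pq \in S) (pr \in S) (ps \in S) => [] [] [] []; rewrite /= ?addnA.
Qed.

Lemma card_profile_le2 (p0 : 'I_m) j : #|profile p0 j| <= 2.
Proof. by case: j => [[|[|[|[|j]]]] lt_j]; rewrite /= ?cards1 ?cards2 //; case: (_ != _). Qed.

Lemma nat_score_profile (p0 : 'I_m) S :
  nat_score (profile p0) S = n ^ 3 + (n * value p0 S + ((pq \in S) && (pr \in S))).
Proof.
rewrite /nat_score /profile -(big_mkord xpredT (fun j => er_weight n #|ballot p0 j :&: S|)).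
rewrite !big_nat_recl //= (sum_nat_divn 3 K (fun l => er_weight n #|[set px l] :&: S|)).
rewrite !card_set1I card_set2I ?pq_neq_pr // er_weight_bool2 !er_weight_bool.
under eq_big_nat => l _ do rewrite card_set1I er_weight_bool.
rewrite big_split /= sum_nat_const_nat -big_distrr /= /index_iota subn0 sum_nat_of_bool /value.
ring.
Qed.

Lemma mem_bigU_profile (p0 : 'I_m) p : p != pt -> p \in Defs.bigU (profile p0).
Proof.
have in_ballot j : j < n -> ballot p0 j \subset Defs.bigU (profile p0).
  move=> jn; apply/subsetP => q qj; apply/bigcupP.
  by exists (inord j); rewrite // /profile inordK.
rewrite -[p]inord_val; case: p => [[|[|[|[|l]]]] /= lt_p]; rewrite ?eqxx // => _.
- by apply: (subsetP (in_ballot 1 _)); rewrite // !inE eqxx.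
- by apply: (subsetP (in_ballot 1 _)); rewrite // !inE eqxx orbT.
- by apply: (subsetP (in_ballot 2 _)); rewrite // !inE.
- apply: (subsetP (in_ballot (3 * l).+4 _)); first lia.
  by rewrite /= mulKn // inE.
Qed.

Lemma upd_profile p p' : upd (profile p) ord0 [set p'] = profile p'.
Proof.
by apply: functional_extensionality => -[[|j] lt_j]; rewrite /upd /profile //=; case: j lt_j.
Qed.

Lemma price_pt : price pt = 2. Proof. by rewrite /price val_pt. Qed.
Lemma price_pq : price pq = 1. Proof. by rewrite /price val_pq. Qed.
Lemma price_pr : price pr = 1. Proof. by rewrite /price val_pr. Qed.

Lemma enum_projects : exists rest, enum 'I_m = [:: pt, pq, pr & rest].
Proof.
exists [seq inord j | j <- iota 3 K.+1].
have -> : enum 'I_m = [seq inord j | j <- iota 0 m].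
  apply: (inj_map val_inj); rewrite val_enum_ord -map_comp map_id_in // => j.
  by rewrite mem_iota => /andP [_ j_lt] /=; rewrite inordK.
by [].
Qed.

Lemma price_gt0 p : 0 < price p.
Proof. exact: (valid_cost_gt0 valid_price p). Qed.

Lemma top_pt V : pt \in V -> top price 2 (enum 'I_m) V = [set pt].
Proof.
move=> tV; have [rest ->] := enum_projects; rewrite /top /greed -cat1s foldl_cat [foldl _ set0 _]/=.
rewrite tV cost_set0 price_pt setU0 greed_foldl_saturated ?cost_set1 ?price_pt //.
exact: price_gt0.
Qed.

Lemma top_pq_pr V : pt \notin V -> pq \in V -> pr \in V -> top price 2 (enum 'I_m) V = [set pq; pr].
Proof.
move=> tV qV rV; have [rest ->] := enum_projects.
rewrite /top /greed -[[:: pt, pq, pr & rest]]/([:: pt; pq; pr] ++ rest).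
rewrite foldl_cat [foldl _ set0 _]/=.
rewrite (negbTE tV) /= qV cost_set0 price_pq /= setU0 rV cost_set1 price_pq price_pr /= setUC.
by rewrite greed_foldl_saturated ?cost_set2 ?pq_neq_pr ?price_pq ?price_pr //; apply: price_gt0.
Qed.

Lemma St_mem :
  [/\ pt \in St = false, pq \in St = false, pr \in St = false, ps \in St & xcount St = K].
Proof.
rewrite !inE val_pt val_pq val_pr val_ps; split => //.
by apply/eqP/xcountP => l lK; rewrite inE val_px.
Qed.

Lemma Sm_mem : [/\ pt \in Sm = false, pq \in Sm, pr \in Sm, ps \in Sm = false & xcount Sm = K].
Proof.
rewrite !inE val_pt val_pq val_pr val_ps; split => //.
by apply/eqP/xcountP => l lK; rewrite inE val_px.
Qed.

Lemma value_St : value pt St = 3 * K + 2.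
Proof.
by have [t_St q_St r_St s_St x_St] := St_mem; rewrite /value t_St q_St r_St s_St x_St; lia.
Qed.

Lemma value_Sm : value pq Sm = 3 * K + 2.
Proof.
by have [t_Sm q_Sm r_Sm s_Sm x_Sm] := Sm_mem; rewrite /value q_Sm r_Sm s_Sm x_Sm; lia.
Qed.

Lemma truthful_optimum S : cost price S <= K.+1 * 2 ->
  n * (3 * K + 2) <= n * value pt S + ((pq \in S) && (pr \in S)) ->
  [/\ pt \in S = false, pq \in S = false, pr \in S = false, ps \in S & xcount S = K].
Proof.
rewrite cost_price /value => feas /(mul_add_leq (leq_ltn_trans (leq_b1 _) (isT : 1 < n))).
move: (xcount_le S) feas; case: (pt \in S) (pq \in S) (pr \in S) (ps \in S) => [] [] [] [] /=;
  by split => //; first [lia | exfalso; lia].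
Qed.

Lemma manipulated_optimum S : cost price S <= K.+1 * 2 ->
  n * (3 * K + 2) + 1 <= n * value pq S + ((pq \in S) && (pr \in S)) ->
  [/\ pt \in S = false, pq \in S, pr \in S, ps \in S = false & xcount S = K].
Proof.
rewrite cost_price => feas le.
have value_eq : value pq S = 3 * K + 2.
  have := mul_add_leq (leq_ltn_trans (leq_b1 _) (isT : 1 < n)) (leq_trans (leq_addr 1 _) le).
  rewrite /value; move: (xcount_le S) feas {le}.
  by case: (pt \in S) (pq \in S) (pr \in S) (ps \in S) => [] [] [] [] /=; lia.
move: le; rewrite value_eq leq_add2l; move: value_eq; rewrite /value.
move: (xcount_le S) feas; case: (pt \in S) (pq \in S) (pr \in S) (ps \in S) => [] [] [] [] //=;
  by split => //; first [lia | exfalso; lia].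
Qed.

Lemma R_truthful : R_er K.+1 price 2 (profile pt) = St.
Proof.
have [t_St q_St r_St s_St x_St] := St_mem.
apply: R_er_unique_optimum.
- apply/subsetP => p; rewrite inE => p_ge3; apply: mem_bigU_profile.
  by apply: contraTneq p_ge3 => ->; rewrite val_pt.
- by rewrite cost_price t_St q_St r_St s_St x_St; lia.
move=> S; rewrite (ler_er_score _ (card_profile_le2 pt)) // !nat_score_profile leq_add2l.
rewrite value_St q_St addn0 => feas /(truthful_optimum feas) [t_S q_S r_S s_S x_S].
by apply: eq_on_projects; rewrite ?t_S ?q_S ?r_S ?s_S ?t_St ?q_St ?r_St ?s_St.
Qed.

Lemma R_manipulated : R_er K.+1 price 2 (profile pq) = Sm.
Proof.
have [t_Sm q_Sm r_Sm s_Sm x_Sm] := Sm_mem.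
apply: R_er_unique_optimum.
- apply/subsetP => p; rewrite inE => /andP [p_gt0 _]; apply: mem_bigU_profile.
  by apply: contraTneq p_gt0 => ->; rewrite val_pt.
- by rewrite cost_price t_Sm q_Sm r_Sm s_Sm x_Sm; lia.
move=> S; rewrite (ler_er_score _ (card_profile_le2 pq)) // !nat_score_profile leq_add2l.
rewrite value_Sm q_Sm r_Sm => feas /(manipulated_optimum feas) [t_S q_S r_S s_S x_S].
by apply: eq_on_projects; rewrite ?t_S ?q_S ?r_S ?s_S ?t_Sm ?q_Sm ?r_Sm ?s_Sm.
Qed.

Lemma truthful_outcome_useless mo F (A : 'I_n -> {set 'I_m}) :
  is_alloc_rule F -> profile_on St A ->
  util mo price [set pq; pr] (F_star F mo St price 2 (enum 'I_m) ord0 A) = 0.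
Proof.
have [_ q_St r_St _ _] := St_mem.
move=> F_rule A_on; apply/util_disjoint/(disjointWl (F_star_sub _ _ _ F_rule valid_price A_on)).
by rewrite disjoint_sym disjoints_subset subUset !sub1set !in_setC q_St r_St.
Qed.

Lemma manipulated_outcome mo F : is_alloc_rule F -> unanimous F ->
  F_star F mo Sm price 2 (enum 'I_m) ord0 (fun _ : 'I_n => [set pq; pr]) = [set pq; pr].
Proof.
have [t_Sm q_Sm r_Sm _ _] := Sm_mem.
have cost_qr : cost price [set pq; pr] = 2 by rewrite cost_set2 ?pq_neq_pr ?price_pq ?price_pr.
move=> F_rule F_unan; apply: (F_star_const _ _ F_rule valid_price F_unan).
- by rewrite subUset !sub1set q_Sm r_Sm.
- by rewrite cost_qr.
- by move=> W; apply: saturated_cost_maximal price_gt0 cost_qr.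
- by rewrite top_pq_pr ?t_Sm.
Qed.

Lemma pq_report_successful mt mo F : is_alloc_rule F -> unanimous F ->
  successful_manip mt mo K.+1 F price 2 (enum 'I_m) (profile pt) ord0 [set pq].
Proof.
have [t_St _ _ _ _] := St_mem; have [t_Sm q_Sm r_Sm _ _] := Sm_mem.
move=> F_rule F_unan; rewrite /successful_manip; cbv zeta.
rewrite upd_profile R_truthful R_manipulated top_pq_pr ?in_setU ?t_St ?t_Sm ?q_Sm ?r_Sm ?orbT //.
have set0_on : profile_on St (fun _ : 'I_n => set0) by move=> j; apply: sub0set.
have qr_on : profile_on Sm (fun _ : 'I_n => [set pq; pr]).
  by move=> j; rewrite subUset !sub1set q_Sm r_Sm.
have gain :
  util mo price [set pq; pr] (F_star F mo St price 2 (enum 'I_m) ord0 (fun _ : 'I_n => set0)) <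
  util mo price [set pq; pr]
    (F_star F mo Sm price 2 (enum 'I_m) ord0 (fun _ : 'I_n => [set pq; pr])).
  rewrite truthful_outcome_useless // manipulated_outcome //.
  by apply: util_self_gt0 price_gt0 _; apply/set0Pn; exists pq; rewrite !inE eqxx.
case: mt; last by exists (fun _ => set0), (fun _ => [set pq; pr]).
split; last by exists (fun _ => set0), (fun _ => [set pq; pr]).
by move=> A A' A_on _; rewrite truthful_outcome_useless.
Qed.

End Counterexample.

Theorem proposition6 :
  forall (mo : pref_model) (k : nat), 0 < k ->
  forall F : alloc_rule, is_alloc_rule F -> unanimous F ->
    ~ UFSSP Pessimistic mo k F /\ ~ UFSSP Optimistic mo k F.
Proof.
move=> mo [|K] // _ F F_rule F_unan.
suff no_UFSSP mt : ~ UFSSP mt mo K.+1 F by split; apply: no_UFSSP.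
move=> ufssp; pose P := profile (pt K).
have q_available : [set pq K] \subset P ord0 :|: Defs.bigU P.
  by rewrite sub1set inE mem_bigU_profile ?orbT // -(inj_eq val_inj) /= val_pq val_pt.
have := ufssp _ _ (@price K) 2 (fun _ => enum _) (valid_price K) (fun _ => perm_refl _)
  P P (fun _ => subxx _) ord0 _ q_available.
by rewrite top_pt ?inE ?eqxx // upd_profile; apply; apply: pq_report_successful.
Qed.
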